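(* Let $F$ be the unique series in $\mathbb{Q}[x,\bar x,y,\bar y][[t]]$ satisfying $(1-St)F=\bar x\bar y-\bar x t[x^0]F-\bar y t[y^0]F$, let $F_4=[x^\ge][y^\ge]F$, and put $O=xy-\bar xy-x\bar y+\bar x\bar y$. Then $$F_4(x,y,t)=\bar x\bar y t^2\,[y^>]\Bigl(\Bigl([\bar x]\frac{(y-\bar y)\,[\bar y]\frac{O}{1-St}}{1-St}\Bigr)\Bigl([x^>]\frac{x-\bar x}{1-St}\Bigr)\Bigr)+\bar x\bar y t^2\,[x^>]\Bigl(\Bigl([\bar y]\frac{(x-\bar x)\,[\bar x]\frac{O}{1-St}}{1-St}\Bigr)\Bigl([y^>]\frac{y-\bar y}{1-St}\Bigr)\Bigr).$$
   Context: Notation: $\bar x=x^{-1}$, $\bar y=y^{-1}$, $S=x+y+\bar x+\bar y$; series in $\mathbb{Q}[x,\bar x,y,\bar y][[t]]$, with $1/(1-St)$ expanded as a power series in $t$. For $G=\sum c_{i,j,n}x^iy^jt^n$: $[x^0]G=\sum_{j,n}c_{0,j,n}y^jt^n$; $[x^\ge]G$, $[x^>]G$ denote the sums of terms with $x$-exponent $\ge0$, $>0$ respectively, analogously for $y$; $[\bar x]G=\sum_{j,n}c_{-1,j,n}y^jt^n$ is the coefficient of $x^{-1}$ and $[\bar y]G=\sum_{i,n}c_{i,-1,n}x^it^n$ the coefficient of $y^{-1}$. *)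

From mathcomp Require Import all_boot all_order all_algebra.
Set Implicit Arguments. Unset Strict Implicit. Unset Printing Implicit Defensive.
Import Order.TTheory GRing.Theory Num.Theory.
Local Open Scope ring_scope.

(* Laurent polynomials in x, y over Q, represented by a (non-canonical)     *)
(* list of terms ((i, j), c) standing for c x^i y^j.  Two Laurent           *)
(* polynomials are equal iff all their coefficients [lcoef] agree.          *)
Definition lpoly := seq ((int * int) * rat).

Definition lcoef (p : lpoly) (i j : int) : rat :=
  \sum_(m <- p | (m.1.1 == i) && (m.1.2 == j)) m.2.

Definition lmon (i j : int) (c : rat) : lpoly := [:: ((i, j), c)].
Definition lzero : lpoly := [::].
Definition lone : lpoly := lmon 0 0 1.
Definition ladd (p q : lpoly) : lpoly := p ++ q.
Definition lscale (c : rat) (p : lpoly) : lpoly := [seq (m.1, c * m.2) | m <- p].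
Definition lmul (p q : lpoly) : lpoly :=
  [seq ((a.1.1 + b.1.1, a.1.2 + b.1.2), a.2 * b.2) | a <- p, b <- q].
Definition lpow (p : lpoly) (n : nat) : lpoly := iter n (lmul p) lone.

Definition lx : lpoly := lmon 1 0 1.
Definition lxb : lpoly := lmon (-1) 0 1.
Definition ly : lpoly := lmon 0 1 1.
Definition lyb : lpoly := lmon 0 (-1) 1.

Definition S_ : lpoly := ladd lx (ladd ly (ladd lxb lyb)).
Definition O_ : lpoly :=
  ladd (lmon 1 1 1) (ladd (lmon (-1) 1 (-1)) (ladd (lmon 1 (-1) (-1)) (lmon (-1) (-1) 1))).

Definition series := nat -> lpoly.

Definition scoef (G : series) (n : nat) (i j : int) : rat := lcoef (G n) i j.

Definition seqv (A B : series) : Prop :=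
  forall n i j, scoef A n i j = scoef B n i j.

Definition sconst (p : lpoly) : series := fun n => if n is 0%N then p else lzero.
Definition sadd (A B : series) : series := fun n => ladd (A n) (B n).
Definition sopp (A : series) : series := fun n => lscale (-1) (A n).
Definition ssub (A B : series) : series := sadd A (sopp B).
Definition spmul (p : lpoly) (A : series) : series := fun n => lmul p (A n).
Definition smul_t (A : series) : series :=
  fun n => if n is n'.+1 then A n' else lzero.
Definition smul (A B : series) : series :=
  fun n => flatten [seq lmul (A k) (B (n - k)%N) | k <- iota 0 n.+1].

Definition geomS : series := fun n => lpow S_ n.
Definition sdivS (A : series) : series := smul geomS A.

Definition sx0 (G : series) : series := fun n => [seq m <- G n | m.1.1 == 0].
Definition sy0 (G : series) : series := fun n => [seq m <- G n | m.1.2 == 0].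
Definition sxge (G : series) : series := fun n => [seq m <- G n | 0 <= m.1.1].
Definition sxgt (G : series) : series := fun n => [seq m <- G n | 0 < m.1.1].
Definition syge (G : series) : series := fun n => [seq m <- G n | 0 <= m.1.2].
Definition sygt (G : series) : series := fun n => [seq m <- G n | 0 < m.1.2].
Definition sxbar (G : series) : series :=
  fun n => [seq ((0, m.1.2), m.2) | m <- [seq m <- G n | m.1.1 == -1]].
Definition sybar (G : series) : series :=
  fun n => [seq ((m.1.1, 0), m.2) | m <- [seq m <- G n | m.1.2 == -1]].

Definition F_equation (F : series) : Prop :=
  seqv (ssub F (smul_t (spmul S_ F)))
       (ssub (ssub (sconst (lmul lxb lyb)) (smul_t (spmul lxb (sx0 F))))
             (smul_t (spmul lyb (sy0 F)))).

Definition F4 (F : series) : series := sxge (syge F).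

Definition RHS4 : series :=
  sadd
    (spmul (lmul lxb lyb) (smul_t (smul_t
       (sygt (smul
          (sxbar (sdivS (spmul (ladd ly (lscale (-1) lyb))
                                (sybar (sdivS (sconst O_))))))
          (sxgt (sdivS (sconst (ladd lx (lscale (-1) lxb))))))))))
    (spmul (lmul lxb lyb) (smul_t (smul_t
       (sxgt (smul
          (sybar (sdivS (spmul (ladd lx (lscale (-1) lxb))
                                (sxbar (sdivS (sconst O_))))))
          (sygt (sdivS (sconst (ladd ly (lscale (-1) lyb)))))))))).

From mathcomp Require Import all_boot all_order all_algebra.
From mathcomp Require Import ring zify.
Set Implicit Arguments. Unset Strict Implicit. Unset Printing Implicit Defensive.
Import Order.TTheory GRing.Theory Num.Theory.
Local Open Scope ring_scope.

(* Write f_n(i,j) for the coefficient of x^i y^j t^n in F.  The functional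
   equation says f_0 = [(i,j) = (-1,-1)] and
     f_{n+1}(i,j) = f_n(i-1,j) + f_n(i,j-1) + [i <> -1] f_n(i+1,j)
                                             + [j <> -1] f_n(i,j+1),
   i.e. f counts walks from (-1,-1) that never step from x = 0 back to x = -1
   nor from y = 0 back to y = -1.  On each quadrant (with the coordinates
   i >= 0 shifted to i+1) f_n is given by an array that solves the free
   recurrence g_{n+1} = S g_n + (source) and is odd in both coordinates:
   the SW array is the coefficient array of O/(1-St); the NW and SE arrays
   are driven by the values of the SW array on the lines y = -1, x = -1
   (the series [ybar] O/(1-St), [xbar] O/(1-St)); the NE array by those of
   the NW and SE arrays.  Oddness makes all arrays vanish on the axes, which
   is exactly what absorbs the forbidden steps (Lemma [quadrants]).  Finally
   the coefficients of the right-hand side are computed to be those of the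
   NE array (Lemma [RHS4_coef]), and the theorem follows. *)

Lemma lcoefE (p : lpoly) i j :
  lcoef p i j = \sum_(m <- p) (if (m.1.1 == i) && (m.1.2 == j) then m.2 else 0).
Proof. by rewrite /lcoef big_mkcond. Qed.

Lemma lcoef_lzero i j : lcoef lzero i j = 0.
Proof. exact: big_nil. Qed.

Lemma lcoef_lmon a b c i j :
  lcoef (lmon a b c) i j = if (a == i) && (b == j) then c else 0.
Proof. by rewrite lcoefE big_seq1. Qed.

Lemma lcoef_ladd p q i j : lcoef (ladd p q) i j = lcoef p i j + lcoef q i j.
Proof. by rewrite /lcoef big_cat. Qed.

Lemma lcoef_flatten (L : seq lpoly) i j :
  lcoef (flatten L) i j = \sum_(p <- L) lcoef p i j.
Proof.
elim: L => [|p L IH]; first by rewrite /lcoef !big_nil.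
by rewrite /= -/(ladd p (flatten L)) lcoef_ladd IH big_cons.
Qed.

Lemma lcoef_lscale c p i j : lcoef (lscale c p) i j = c * lcoef p i j.
Proof.
rewrite !lcoefE big_map mulr_sumr; apply: eq_bigr => m _ /=.
by case: ifP; rewrite ?mulr0.
Qed.

Lemma lcoef_filter (Q : int -> int -> bool) p i j :
  lcoef [seq m <- p | Q m.1.1 m.1.2] i j = if Q i j then lcoef p i j else 0.
Proof.
rewrite !lcoefE big_filter big_mkcond.
case: ifP => Qij; [apply: eq_bigr | apply: big1] => m _;
  by case: (boolP (_ && _)) => [/andP[/eqP-> /eqP->]|_]; rewrite ?Qij ?if_same.
Qed.

Lemma lcoef_lmul_pairs p q i j : lcoef (lmul p q) i j =
  \sum_(a <- p) \sum_(b <- q)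
    (if (a.1.1 + b.1.1 == i) && (a.1.2 + b.1.2 == j) then a.2 * b.2 else 0).
Proof. by rewrite lcoefE /lmul big_allpairs_dep. Qed.

Lemma lcoef_lmul p q i j :
  lcoef (lmul p q) i j = \sum_(a <- p) a.2 * lcoef q (i - a.1.1) (j - a.1.2).
Proof.
rewrite lcoef_lmul_pairs; apply: eq_bigr => a _; rewrite lcoefE mulr_sumr.
apply: eq_bigr => b _ /=.
have -> : (a.1.1 + b.1.1 == i) = (b.1.1 == i - a.1.1) by apply/eqP/eqP; lia.
have -> : (a.1.2 + b.1.2 == j) = (b.1.2 == j - a.1.2) by apply/eqP/eqP; lia.
by case: ifP; rewrite ?mulr0.
Qed.

Lemma lcoef_lmulC p q i j : lcoef (lmul p q) i j = lcoef (lmul q p) i j.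
Proof.
rewrite !lcoef_lmul_pairs exchange_big; apply: eq_bigr => b _; apply: eq_bigr => a _.
by rewrite (addrC b.1.1) (addrC b.1.2) mulrC.
Qed.

Lemma lcoef_lmulA p q r i j :
  lcoef (lmul (lmul p q) r) i j = lcoef (lmul p (lmul q r)) i j.
Proof.
rewrite lcoef_lmul {1}/lmul big_allpairs_dep lcoef_lmul; apply: eq_bigr => a _.
rewrite lcoef_lmul mulr_sumr; apply: eq_bigr => b _ /=.
by rewrite mulrA !opprD !addrA.
Qed.

Lemma lcoef_lmul_congr p q q' :
  lcoef q =2 lcoef q' -> lcoef (lmul p q) =2 lcoef (lmul p q').
Proof. by move=> eq_q i j; rewrite !lcoef_lmul; apply: eq_bigr => a _; rewrite eq_q. Qed.

Lemma lcoef_lmul_lmon a b c q i j :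
  lcoef (lmul (lmon a b c) q) i j = c * lcoef q (i - a) (j - b).
Proof. by rewrite lcoef_lmul big_seq1. Qed.

Lemma lcoef_lmul_ladd p p' q i j :
  lcoef (lmul (ladd p p') q) i j = lcoef (lmul p q) i j + lcoef (lmul p' q) i j.
Proof. by rewrite !lcoef_lmul big_cat. Qed.

Lemma lcoef_lmul_lscale c p q i j :
  lcoef (lmul (lscale c p) q) i j = c * lcoef (lmul p q) i j.
Proof.
by rewrite !lcoef_lmul big_map mulr_sumr; apply: eq_bigr => a _; rewrite /= mulrA.
Qed.

Definition grid := int -> int -> rat.

Definition fzero : grid := fun _ _ => 0.
Definition fadd (f g : grid) : grid := fun i j => f i j + g i j.

(* Multiplication by S, by x - xbar and by y - ybar, on coefficient arrays. *)
Definition mulS (f : grid) : grid :=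
  fun i j => f (i - 1) j + f i (j - 1) + f (i + 1) j + f i (j + 1).
Definition mulX (f : grid) : grid := fun i j => f (i - 1) j - f (i + 1) j.
Definition mulY (f : grid) : grid := fun i j => f i (j - 1) - f i (j + 1).
Definition powS (n : nat) (f : grid) : grid := iter n mulS f.

(* The solution of g_0 = 0, g_{n+1} = S g_n + a_n: evolve a n is the
   coefficient of t^n in t A/(1 - S t), where A = \sum_n a_n t^n. *)
Fixpoint evolve (a : nat -> grid) (n : nat) : grid :=
  if n is m.+1 then fadd (mulS (evolve a m)) (a m) else fzero.

Lemma mulS_congr f g : f =2 g -> mulS f =2 mulS g.
Proof. by move=> eq_fg i j; rewrite /mulS !eq_fg. Qed.

Lemma mulX_congr f g : f =2 g -> mulX f =2 mulX g.
Proof. by move=> eq_fg i j; rewrite /mulX !eq_fg. Qed.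

Lemma mulY_congr f g : f =2 g -> mulY f =2 mulY g.
Proof. by move=> eq_fg i j; rewrite /mulY !eq_fg. Qed.

Lemma powS_congr n f g : f =2 g -> powS n f =2 powS n g.
Proof. by move=> eq_fg; elim: n => //= n; apply: mulS_congr. Qed.

Lemma evolve_congr a b n : (forall k, a k =2 b k) -> evolve a n =2 evolve b n.
Proof.
move=> eq_ab; elim: n => //= n IH i j.
by rewrite /fadd (mulS_congr IH) eq_ab.
Qed.

Lemma mulS_sum m (g : nat -> grid) i j :
  mulS (fun i j => \sum_(k < m) g k i j) i j = \sum_(k < m) mulS (g k) i j.
Proof. by rewrite /mulS !big_split. Qed.

Lemma mulS_add f g : mulS (fadd f g) =2 fadd (mulS f) (mulS g).
Proof. by move=> i j; rewrite /mulS /fadd; ring. Qed.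

Lemma powS_fzero n i j : powS n fzero i j = 0.
Proof. by elim: n i j => //= n IH i j; rewrite /mulS !IH !addr0. Qed.

Lemma powS_add n f g : powS n (fadd f g) =2 fadd (powS n f) (powS n g).
Proof. by elim: n => //= n IH i j; rewrite (mulS_congr IH) mulS_add. Qed.

Lemma evolve_shift a n : a 0%N =2 fzero ->
  evolve a n.+1 =2 evolve (fun k => a k.+1) n.
Proof.
move=> a0; elim: n => [|n IH] i j /=; first by rewrite /fadd /mulS a0 /fzero; ring.
by rewrite /fadd (mulS_congr IH).
Qed.

Lemma evolveE a n i j :
  evolve a n.+1 i j = \sum_(k < n.+1) powS (n - k) (a k) i j.
Proof.
elim: n i j => [|n IH] i j; first by rewrite big_ord1 /= /fadd /mulS /fzero; ring.
rewrite big_ord_recr /= subnn {1}/fadd (mulS_congr IH).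
rewrite (mulS_sum _ (fun k => powS (n - k) (a k))).
by congr (_ + _); apply: eq_bigr => k _; rewrite subSn // -ltnS.
Qed.

Definition xdiff : lpoly := ladd lx (lscale (-1) lxb).
Definition ydiff : lpoly := ladd ly (lscale (-1) lyb).

Lemma lcoef_mulS q i j : lcoef (lmul S_ q) i j = mulS (lcoef q) i j.
Proof.
rewrite /S_ /lx /ly /lxb /lyb !lcoef_lmul_ladd !lcoef_lmul_lmon /mulS.
by rewrite !mul1r !subr0 !opprK !addrA.
Qed.

Lemma lcoef_mulX q i j : lcoef (lmul xdiff q) i j = mulX (lcoef q) i j.
Proof.
rewrite lcoef_lmul_ladd lcoef_lmul_lscale !lcoef_lmul_lmon /mulX.
by rewrite !mul1r !subr0 opprK mulN1r.
Qed.

Lemma lcoef_mulY q i j : lcoef (lmul ydiff q) i j = mulY (lcoef q) i j.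
Proof.
rewrite lcoef_lmul_ladd lcoef_lmul_lscale !lcoef_lmul_lmon /mulY.
by rewrite !mul1r !subr0 opprK mulN1r.
Qed.

Lemma lcoef_mulxb q i j : lcoef (lmul lxb q) i j = lcoef q (i + 1) j.
Proof. by rewrite lcoef_lmul_lmon mul1r opprK subr0. Qed.

Lemma lcoef_mulyb q i j : lcoef (lmul lyb q) i j = lcoef q i (j + 1).
Proof. by rewrite lcoef_lmul_lmon mul1r opprK subr0. Qed.

Lemma lcoef_mulxbyb q i j :
  lcoef (lmul (lmul lxb lyb) q) i j = lcoef q (i + 1) (j + 1).
Proof. by rewrite lcoef_lmulA lcoef_mulxb lcoef_mulyb. Qed.

Lemma lcoef_mulSn n q : lcoef (lmul (lpow S_ n) q) =2 powS n (lcoef q).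
Proof.
elim: n => [|n IH] i j; first by rewrite lcoef_lmul_lmon mul1r !subr0.
by rewrite /lpow iterS -/(lpow S_ n) lcoef_lmulA lcoef_mulS (mulS_congr IH).
Qed.

Lemma lcoef_smul A B n i j :
  lcoef (smul A B n) i j = \sum_(k < n.+1) lcoef (lmul (A k) (B (n - k)%N)) i j.
Proof.
rewrite lcoef_flatten big_map.
by rewrite -(big_mkord xpredT (fun k => lcoef (lmul (A k) (B (n - k)%N)) i j)).
Qed.

Lemma lcoef_sdivS A n :
  lcoef (sdivS A n) =2 evolve (fun k => lcoef (A k)) n.+1.
Proof.
move=> i j; rewrite lcoef_smul evolveE (reindex_inj rev_ord_inj) /=.
apply: eq_bigr => k _; rewrite lcoef_mulSn subSS subKn //.
by rewrite -ltnS.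
Qed.

Lemma lcoef_sdivS_const p n : lcoef (sdivS (sconst p) n) =2 powS n (lcoef p).
Proof.
move=> i j; rewrite lcoef_sdivS evolveE big_ord_recl subn0 /= big1 ?addr0 // => k _.
by rewrite (powS_congr _ (g := fzero)) ?powS_fzero // => i' j'; rewrite lcoef_lzero.
Qed.

Lemma lcoef_sx0 G n i j :
  lcoef (sx0 G n) i j = if i == 0 then lcoef (G n) i j else 0.
Proof. exact: (lcoef_filter (fun a _ => a == 0)). Qed.

Lemma lcoef_sy0 G n i j :
  lcoef (sy0 G n) i j = if j == 0 then lcoef (G n) i j else 0.
Proof. exact: (lcoef_filter (fun _ b => b == 0)). Qed.

Lemma lcoef_sxge G n i j :
  lcoef (sxge G n) i j = if 0 <= i then lcoef (G n) i j else 0.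
Proof. exact: (lcoef_filter (fun a _ => 0 <= a)). Qed.

Lemma lcoef_syge G n i j :
  lcoef (syge G n) i j = if 0 <= j then lcoef (G n) i j else 0.
Proof. exact: (lcoef_filter (fun _ b => 0 <= b)). Qed.

Lemma lcoef_sxgt G n i j :
  lcoef (sxgt G n) i j = if 0 < i then lcoef (G n) i j else 0.
Proof. exact: (lcoef_filter (fun a _ => 0 < a)). Qed.

Lemma lcoef_sygt G n i j :
  lcoef (sygt G n) i j = if 0 < j then lcoef (G n) i j else 0.
Proof. exact: (lcoef_filter (fun _ b => 0 < b)). Qed.

Lemma lcoef_sxbar G n i j :
  lcoef (sxbar G n) i j = if i == 0 then lcoef (G n) (-1) j else 0.
Proof.
rewrite !lcoefE big_map big_filter big_mkcond /= eq_sym.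
case: eqP => [_|_]; last by rewrite big1 // => m _; case: ifP.
by apply: eq_bigr => m _; case: eqP.
Qed.

Lemma lcoef_sybar G n i j :
  lcoef (sybar G n) i j = if j == 0 then lcoef (G n) i (-1) else 0.
Proof.
rewrite !lcoefE big_map big_filter big_mkcond /= (eq_sym 0 j).
case: eqP => [_|_]; last by rewrite big1 // => m _; case: ifP; rewrite ?andbF.
by apply: eq_bigr => m _; case: eqP; rewrite ?andbT ?andbF.
Qed.

Lemma scoef_init F i j : F_equation F ->
  scoef F 0%N i j = if (i == -1) && (j == -1) then 1 else 0.
Proof.
move=> /(_ 0%N i j); rewrite /scoef /ssub /sadd /sopp !lcoef_ladd !lcoef_lscale /=.
rewrite lcoef_lzero lcoef_mulxb lcoef_lmon (eq_sym 0) addr_eq0 (eq_sym (-1)).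
by rewrite !mulr0 !addr0 => ->.
Qed.

Lemma scoef_step F n i j : F_equation F ->
  scoef F n.+1 i j =
    scoef F n (i - 1) j + scoef F n i (j - 1)
    + (if i == -1 then 0 else scoef F n (i + 1) j)
    + (if j == -1 then 0 else scoef F n i (j + 1)).
Proof.
move=> /(_ n.+1 i j); rewrite /scoef /ssub /sadd /sopp !lcoef_ladd !lcoef_lscale /=.
rewrite lcoef_lzero lcoef_mulS !lcoef_mulxb lcoef_mulyb lcoef_sx0 lcoef_sy0 /mulS.
rewrite !addr_eq0 => /(canRL (addrK _)) ->.
by case: eqP; case: eqP => _ _; ring.
Qed.

Definition odd_x (f : grid) := forall i j, f (- i) j = - f i j.
Definition odd_y (f : grid) := forall i j, f i (- j) = - f i j.
Definition even_x (f : grid) := forall i j, f (- i) j = f i j.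
Definition even_y (f : grid) := forall i j, f i (- j) = f i j.
Definition odd_xy (f : grid) := odd_x f /\ odd_y f.

Lemma odd_x_axis f j : odd_x f -> f 0 j = 0.
Proof.
by move=> /(_ 0 j); rewrite oppr0 => /eqP; rewrite -addr_eq0 -mulr2n mulrn_eq0 => /eqP.
Qed.

Lemma odd_y_axis f i : odd_y f -> f i 0 = 0.
Proof.
by move=> /(_ i 0); rewrite oppr0 => /eqP; rewrite -addr_eq0 -mulr2n mulrn_eq0 => /eqP.
Qed.

Lemma opp_shift (k : int) : (- k - 1 = - (k + 1)) * (- k + 1 = - (k - 1)).
Proof. by split; rewrite opprD ?opprK // addrC. Qed.

Lemma odd_xy_fzero : odd_xy fzero.
Proof. by split=> i j; rewrite oppr0. Qed.

Lemma odd_xy_fadd f g : odd_xy f -> odd_xy g -> odd_xy (fadd f g).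
Proof. by move=> [fx fy] [gx gy]; split=> i j; rewrite /fadd (fx, fy) (gx, gy) opprD. Qed.

Lemma odd_xy_mulS f : odd_xy f -> odd_xy (mulS f).
Proof.
move=> [fx fy]; split=> i j; rewrite /mulS !opp_shift.
- by rewrite !fx; ring.
- by rewrite !fy; ring.
Qed.

Lemma powS_odd n f : odd_xy f -> odd_xy (powS n f).
Proof. by move=> f_odd; elim: n => //= n; apply: odd_xy_mulS. Qed.

Lemma evolve_odd a n : (forall k, odd_xy (a k)) -> odd_xy (evolve a n).
Proof.
move=> a_odd; elim: n => [|n IH] /=; first exact: odd_xy_fzero.
exact: odd_xy_fadd (odd_xy_mulS IH) (a_odd n).
Qed.

Lemma mulX_odd f : even_x f -> odd_y f -> odd_xy (mulX f).
Proof. by move=> fx fy; split=> i j; rewrite /mulX ?opp_shift ?fx ?fy; ring. Qed.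

Lemma mulY_odd f : odd_x f -> even_y f -> odd_xy (mulY f).
Proof. by move=> fx fy; split=> i j; rewrite /mulY ?opp_shift ?fx ?fy; ring. Qed.

(* O = (x - xbar)(y - ybar), so its coefficient array is a product of two
   odd one-dimensional arrays. *)
Definition dipole (k : int) : rat := (if k == 1 then 1 else 0) - (if k == -1 then 1 else 0).

Lemma dipoleN k : dipole (- k) = - dipole k.
Proof. by rewrite /dipole !eqr_oppLR opprK; case: (k == 1); case: (k == -1); ring. Qed.

Lemma lcoef_O i j : lcoef O_ i j = dipole i * dipole j.
Proof.
rewrite /O_ !lcoef_ladd !lcoef_lmon /dipole !(eq_sym _ i) !(eq_sym _ j).
by case: (i == 1); case: (i == -1); case: (j == 1); case: (j == -1) => /=; ring.
Qed.

Lemma O_odd : odd_xy (lcoef O_).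
Proof. by split=> i j; rewrite !lcoef_O dipoleN; ring. Qed.

Definition xaxis (g : int -> rat) : grid := fun i j => if j == 0 then g i else 0.
Definition yaxis (g : int -> rat) : grid := fun i j => if i == 0 then g j else 0.

Lemma xaxis_off g i j : j != 0 -> xaxis g i j = 0.
Proof. by rewrite /xaxis => /negPf->. Qed.

Lemma yaxis_off g i j : i != 0 -> yaxis g i j = 0.
Proof. by rewrite /yaxis => /negPf->. Qed.

Lemma mulY_xaxis_odd g : (forall i, g (- i) = - g i) -> odd_xy (mulY (xaxis g)).
Proof.
move=> g_odd; apply: mulY_odd => i j; rewrite /xaxis ?oppr_eq0 //.
by rewrite g_odd; case: ifP; rewrite ?oppr0.
Qed.

Lemma mulX_yaxis_odd g : (forall j, g (- j) = - g j) -> odd_xy (mulX (yaxis g)).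
Proof.
move=> g_odd; apply: mulX_odd => i j; rewrite /yaxis ?oppr_eq0 //.
by rewrite g_odd; case: ifP; rewrite ?oppr0.
Qed.

Definition sw (n : nat) : grid := powS n (lcoef O_).
Definition nw : nat -> grid := evolve (fun k => mulY (xaxis (fun i => sw k i (-1)))).
Definition se : nat -> grid := evolve (fun k => mulX (yaxis (sw k (-1)))).
Definition ne : nat -> grid :=
  evolve (fun k => fadd (mulX (yaxis (nw k (-1)))) (mulY (xaxis (fun i => se k i (-1))))).

Lemma swS n i j : sw n.+1 i j = mulS (sw n) i j.
Proof. by []. Qed.

Lemma nwS n i j :
  nw n.+1 i j = mulS (nw n) i j + mulY (xaxis (fun i => sw n i (-1))) i j.
Proof. by []. Qed.

Lemma seS n i j : se n.+1 i j = mulS (se n) i j + mulX (yaxis (sw n (-1))) i j.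
Proof. by []. Qed.

Lemma neS n i j : ne n.+1 i j =
  mulS (ne n) i j + mulX (yaxis (nw n (-1))) i j + mulY (xaxis (fun i => se n i (-1))) i j.
Proof. exact: addrA. Qed.

Lemma sw_odd n : odd_xy (sw n).
Proof. exact: powS_odd O_odd. Qed.

Lemma nw_odd n : odd_xy (nw n).
Proof. by apply: evolve_odd => k; apply: mulY_xaxis_odd => i; apply: (sw_odd k).1. Qed.

Lemma se_odd n : odd_xy (se n).
Proof. by apply: evolve_odd => k; apply: mulX_yaxis_odd => j; apply: (sw_odd k).2. Qed.

Lemma ne_odd n : odd_xy (ne n).
Proof.
apply: evolve_odd => k; apply: odd_xy_fadd.
- by apply: mulX_yaxis_odd => j; apply: (nw_odd k).2.
- by apply: mulY_xaxis_odd => i; apply: (se_odd k).1.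
Qed.

Section Quadrants.

Variable f : nat -> grid.
Hypothesis f_init : forall i j : int, f 0%N i j = if (i == -1) && (j == -1) then 1 else 0.
Hypothesis f_step : forall (n : nat) (i j : int),
  f n.+1 i j = f n (i - 1) j + f n i (j - 1)
             + (if i == -1 then 0 else f n (i + 1) j)
             + (if j == -1 then 0 else f n i (j + 1)).

(* One step of the induction: each of the four neighbour terms of the
   recurrence is matched with the corresponding term of the recurrence of the
   quadrant array; a neighbour across an axis contributes the source term,
   while the array itself vanishes on that axis. *)
Section Step.

Variable n : nat.
Hypothesis sw_n : forall i j : int, i < 0 -> j < 0 -> f n i j = sw n i j.
Hypothesis nw_n : forall i j : int, i < 0 -> 0 <= j -> f n i j = nw n i (j + 1).
Hypothesis se_n : forall i j : int, 0 <= i -> j < 0 -> f n i j = se n (i + 1) j.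
Hypothesis ne_n : forall i j : int, 0 <= i -> 0 <= j -> f n i j = ne n (i + 1) (j + 1).

Lemma sw_step i j : i < 0 -> j < 0 -> f n.+1 i j = sw n.+1 i j.
Proof.
move=> hi hj.
have west : f n (i - 1) j = sw n (i - 1) j by apply: sw_n; lia.
have south : f n i (j - 1) = sw n i (j - 1) by apply: sw_n; lia.
have east : (if i == -1 then 0 else f n (i + 1) j) = sw n (i + 1) j.
  case: eqP => [-> | ?]; first by rewrite addNr (odd_x_axis _ (sw_odd n).1).
  by apply: sw_n; lia.
have north : (if j == -1 then 0 else f n i (j + 1)) = sw n i (j + 1).
  case: eqP => [-> | ?]; first by rewrite addNr (odd_y_axis _ (sw_odd n).2).
  by apply: sw_n; lia.
by rewrite f_step west south east north swS.
Qed.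

Lemma nw_step i j : i < 0 -> 0 <= j -> f n.+1 i j = nw n.+1 i (j + 1).
Proof.
move=> hi hj.
have west : f n (i - 1) j = nw n (i - 1) (j + 1) by apply: nw_n; lia.
have south : f n i (j - 1) = nw n i j + xaxis (fun i => sw n i (-1)) i j.
  rewrite /xaxis; case: eqP => [-> | ?]; last by rewrite addr0 nw_n ?subrK //; lia.
  by rewrite (odd_y_axis _ (nw_odd n).2) sw_n ?add0r //; lia.
have east : (if i == -1 then 0 else f n (i + 1) j) = nw n (i + 1) (j + 1).
  case: eqP => [-> | ?]; first by rewrite addNr (odd_x_axis _ (nw_odd n).1).
  by apply: nw_n; lia.
have north : (if j == -1 then 0 else f n i (j + 1)) = nw n i (j + 1 + 1).
  by case: eqP => [? | ?]; [lia | apply: nw_n; lia].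
rewrite f_step west south east north nwS /mulS /mulY addrK.
by rewrite [xaxis _ _ (j + 1 + 1)]xaxis_off; [ring | lia].
Qed.

Lemma se_step i j : 0 <= i -> j < 0 -> f n.+1 i j = se n.+1 (i + 1) j.
Proof.
move=> hi hj.
have west : f n (i - 1) j = se n i j + yaxis (sw n (-1)) i j.
  rewrite /yaxis; case: eqP => [-> | ?]; last by rewrite addr0 se_n ?subrK //; lia.
  by rewrite (odd_x_axis _ (se_odd n).1) sw_n ?add0r //; lia.
have south : f n i (j - 1) = se n (i + 1) (j - 1) by apply: se_n; lia.
have east : (if i == -1 then 0 else f n (i + 1) j) = se n (i + 1 + 1) j.
  by case: eqP => [? | ?]; [lia | apply: se_n; lia].
have north : (if j == -1 then 0 else f n i (j + 1)) = se n (i + 1) (j + 1).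
  case: eqP => [-> | ?]; first by rewrite addNr (odd_y_axis _ (se_odd n).2).
  by apply: se_n; lia.
rewrite f_step west south east north seS /mulS /mulX addrK.
by rewrite [yaxis _ (i + 1 + 1) _]yaxis_off; [ring | lia].
Qed.

Lemma ne_step i j : 0 <= i -> 0 <= j -> f n.+1 i j = ne n.+1 (i + 1) (j + 1).
Proof.
move=> hi hj.
have west : f n (i - 1) j = ne n i (j + 1) + yaxis (nw n (-1)) i (j + 1).
  rewrite /yaxis; case: eqP => [-> | ?]; last by rewrite addr0 ne_n ?subrK //; lia.
  by rewrite (odd_x_axis _ (ne_odd n).1) nw_n ?add0r //; lia.
have south : f n i (j - 1) = ne n (i + 1) j + xaxis (fun i => se n i (-1)) (i + 1) j.
  rewrite /xaxis; case: eqP => [-> | ?]; last by rewrite addr0 ne_n ?subrK //; lia.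
  by rewrite (odd_y_axis _ (ne_odd n).2) se_n ?add0r //; lia.
have east : (if i == -1 then 0 else f n (i + 1) j) = ne n (i + 1 + 1) (j + 1).
  by case: eqP => [? | ?]; [lia | apply: ne_n; lia].
have north : (if j == -1 then 0 else f n i (j + 1)) = ne n (i + 1) (j + 1 + 1).
  by case: eqP => [? | ?]; [lia | apply: ne_n; lia].
rewrite f_step west south east north neS /mulS /mulX /mulY !addrK.
rewrite [yaxis _ (i + 1 + 1) _]yaxis_off ?[xaxis _ _ (j + 1 + 1)]xaxis_off; try lia.
by ring.
Qed.

End Step.

Lemma quadrants n :
  [/\ forall i j : int, i < 0 -> j < 0 -> f n i j = sw n i j,
      forall i j : int, i < 0 -> 0 <= j -> f n i j = nw n i (j + 1),
      forall i j : int, 0 <= i -> j < 0 -> f n i j = se n (i + 1) j &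
      forall i j : int, 0 <= i -> 0 <= j -> f n i j = ne n (i + 1) (j + 1)].
Proof.
elim: n => [|n [Hsw Hnw Hse Hne]]; last first.
  by split=> i j; [exact: sw_step | exact: nw_step | exact: se_step | exact: ne_step].
have off (k : int) : 0 <= k -> (k == -1) = false by move=> k_ge0; apply/eqP; lia.
have neg (k : int) : k < 0 -> (k == 1) = false by move=> k_lt0; apply/eqP; lia.
split=> i j hi hj; rewrite f_init.
- rewrite /sw /= lcoef_O /dipole !neg //.
  by case: (i == -1); case: (j == -1) => /=; ring.
- by rewrite (off j) ?andbF.
- by rewrite (off i).
- by rewrite (off i).
Qed.

End Quadrants.

Definition nw_series : series := sdivS (spmul ydiff (sybar (sdivS (sconst O_)))).
Definition se_series : series := sdivS (spmul xdiff (sxbar (sdivS (sconst O_)))).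

Lemma lcoef_nw_series k : lcoef (nw_series k) =2 nw k.+1.
Proof.
move=> i j; rewrite lcoef_sdivS; apply: evolve_congr => l a b.
rewrite /spmul lcoef_mulY; apply: mulY_congr => c d.
by rewrite lcoef_sybar lcoef_sdivS_const.
Qed.

Lemma lcoef_se_series k : lcoef (se_series k) =2 se k.+1.
Proof.
move=> i j; rewrite lcoef_sdivS; apply: evolve_congr => l a b.
rewrite /spmul lcoef_mulX; apply: mulX_congr => c d.
by rewrite lcoef_sxbar lcoef_sdivS_const.
Qed.

Lemma lcoef_lmul_sxgt (A B : lpoly) i j : all (fun a => a.1.1 == 0) A ->
  lcoef (lmul A [seq m <- B | 0 < m.1.1]) i j = if 0 < i then lcoef (lmul A B) i j else 0.
Proof.
rewrite !lcoef_lmul; elim: A => [|a A IH] /=; first by rewrite !big_nil if_same.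
move=> /andP[/eqP a0 A0]; rewrite !big_cons IH //.
rewrite (lcoef_filter (fun a _ => 0 < a)) a0 subr0.
by case: ifP; rewrite ?mulr0 ?addr0.
Qed.

Lemma lcoef_lmul_sygt (A B : lpoly) i j : all (fun a => a.1.2 == 0) A ->
  lcoef (lmul A [seq m <- B | 0 < m.1.2]) i j = if 0 < j then lcoef (lmul A B) i j else 0.
Proof.
rewrite !lcoef_lmul; elim: A => [|a A IH] /=; first by rewrite !big_nil if_same.
move=> /andP[/eqP a0 A0]; rewrite !big_cons IH //.
rewrite (lcoef_filter (fun _ b => 0 < b)) a0 subr0.
by case: ifP; rewrite ?mulr0 ?addr0.
Qed.

Lemma sxbar_xfree G n : all (fun a => a.1.1 == 0) (sxbar G n).
Proof. by rewrite /sxbar all_map; apply/allP. Qed.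

Lemma sybar_yfree G n : all (fun a => a.1.2 == 0) (sybar G n).
Proof. by rewrite /sybar all_map; apply/allP. Qed.

Lemma lcoef_lmul_sdivS_const A p m :
  lcoef (lmul A (sdivS (sconst p) m)) =2 powS m (lcoef (lmul p A)).
Proof.
move=> i j; rewrite (@lcoef_lmul_congr _ _ (lmul (lpow S_ m) p)); last first.
  by move=> a b; rewrite lcoef_sdivS_const lcoef_mulSn.
by rewrite lcoef_lmulC lcoef_lmulA lcoef_mulSn.
Qed.

(* The t^(k+m) terms of the two products in RHS4 are the evolutions over m
   steps of the two sources of [ne] at time k+1. *)
Lemma lcoef_ne_xterm k m i j :
  lcoef (lmul (sxbar nw_series k) (sxgt (sdivS (sconst xdiff)) m)) i j
  = if 0 < i then powS m (mulX (yaxis (nw k.+1 (-1)))) i j else 0.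
Proof.
rewrite lcoef_lmul_sxgt ?sxbar_xfree //; case: ifP => // _.
rewrite lcoef_lmul_sdivS_const; apply: powS_congr => a b.
rewrite lcoef_mulX; apply: mulX_congr => c d.
by rewrite lcoef_sxbar lcoef_nw_series.
Qed.

Lemma lcoef_ne_yterm k m i j :
  lcoef (lmul (sybar se_series k) (sygt (sdivS (sconst ydiff)) m)) i j
  = if 0 < j then powS m (mulY (xaxis (fun i => se k.+1 i (-1)))) i j else 0.
Proof.
rewrite lcoef_lmul_sygt ?sybar_yfree //; case: ifP => // _.
rewrite lcoef_lmul_sdivS_const; apply: powS_congr => a b.
rewrite lcoef_mulY; apply: mulY_congr => c d.
by rewrite lcoef_sybar lcoef_se_series.
Qed.

(* The sources of [ne] vanish at time 0, since nw 0 = se 0 = 0. *)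
Lemma ne_shift n : ne n.+1 =2
  evolve (fun k =>
    fadd (mulX (yaxis (nw k.+1 (-1)))) (mulY (xaxis (fun i => se k.+1 i (-1))))) n.
Proof.
apply: evolve_shift => i j.
by rewrite /= /fadd /mulX /mulY /yaxis /xaxis /nw /se /fzero !if_same !subr0.
Qed.

Lemma RHS4_coef n i j :
  lcoef (RHS4 n) i j = if (0 <= i) && (0 <= j) then ne n (i + 1) (j + 1) else 0.
Proof.
rewrite /RHS4 -/xdiff -/ydiff -/nw_series -/se_series.
rewrite /sadd lcoef_ladd /spmul !lcoef_mulxbyb.
case: n => [|[|m]] /=; rewrite ?lcoef_lzero ?addr0.
- by rewrite if_same.
- by rewrite ne_shift if_same.
rewrite lcoef_sygt lcoef_sxgt !lcoef_smul ne_shift evolveE !ltzD1.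
rewrite (eq_bigr _ (fun (k : 'I_m.+1) _ => lcoef_ne_xterm k (m - k) _ _)).
rewrite (eq_bigr _ (fun (k : 'I_m.+1) _ => lcoef_ne_yterm k (m - k) _ _)) !ltzD1.
case: (0 <= i); case: (0 <= j) => /=.
- by rewrite -big_split; apply: eq_bigr => k _; rewrite powS_add.
- by rewrite big1_eq addr0.
- by rewrite big1_eq addr0.
- by rewrite addr0.
Qed.

(* The coefficients of F in the quadrant i, j >= 0 are those of the NE array,
   and so are those of RHS4. *)
Theorem mainTheorem4 (F : series) :
  F_equation F -> seqv (F4 F) RHS4.
Proof.
move=> HF n i j; rewrite /scoef /F4 lcoef_sxge lcoef_syge RHS4_coef.
have [_ _ _ F_ne] := quadrants (fun i j => scoef_init i j HF)
                               (fun n i j => scoef_step n i j HF) n.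
by case: (boolP (0 <= i)) => hi; case: (boolP (0 <= j)) => hj //=; apply: F_ne.
Qed.
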